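(* Assume in addition that $\mathbb{X}_f$ contains an open neighborhood of the origin and that $\mathbb{X}$ is compact. Then $V$ is a Lyapunov function on $\mathbb{X}$ for the closed-loop system $x^+=f(x,\kappa(x))$. That is, $\mathbb{X}$ is invariant under the closed loop, and there are class $\mathcal{K}_\infty$ functions $\alpha_1,\beta$ with $\alpha_1(|x|)\le V(x)\le\beta(|x|)$ and $V(f(x,\kappa(x)))\le V(x)-\alpha_1(|x|)$ for all $x\in\mathbb{X}$. Consequently the origin is asymptotically stable for the closed-loop system $x^+=f(x,\kappa(x))$ on $\mathbb{X}$.
   Context: Consider the discrete-time controlled system $x^+=f(x,u)$ with state $x\in\mathbb{R}^{n}$ and control $u\in\mathbb{R}^{m}$, constraint sets $\mathbb{X}\subset\mathbb{R}^n$, $\mathbb{U}\subset\mathbb{R}^m$, $\mathbb{Y}\subset\mathbb{R}^p$, and a constraint function $h(x,u)\in\mathbb{R}^p$. A control $u$ is feasible at $x\in\mathbb{X}$ if $u\in\mathbb{U}$, $f(x,u)\in\mathbb{X}$ and $h(x,u)\in\mathbb{Y}$. A control sequence $(u(0),\ldots,u(N-1))$ is feasible from $x$ if, for the state sequence defined by $x(0)=x$ and $x(k+1)=f(x(k),u(k))$, each $u(k)$ is feasible at $x(k)$. We are given a stage cost $l(x,u)$, a terminal set $\mathbb{X}_f$ and a terminal cost $V_f$ defined on $\mathbb{X}_f$. Horizon-$N$ problem at $x$: minimize $\sum_{k=0}^{N-1}l(x(k),u(k))+V_f(x(N))$ over control sequences that are feasible from $x$ and satisfy $x(N)\in\mathbb{X}_f$.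 Let $V_N^0(x)$ be its minimum value, which is assumed to be attained whenever the feasible set is nonempty. Let $(u^0_N(0),\ldots,u^0_N(N-1))$ be a minimizer, and set $\kappa_N(x)=u_N^0(0)$. For $N=0$, $V_0^0(x)=V_f(x)$ for $x\in\mathbb{X}_f$. Standing assumptions: (A1) $f,l,h,V_f$ are continuous on an open set containing $\mathbb{X}\times\mathbb{U}$ (for $V_f$, an open set containing $\mathbb{X}_f$). The stage cost $l$ is nonnegative definite in $(x,u)$ and positive definite in $u$. $V_f$ is positive definite on $\mathbb{X}_f$. Moreover $f(0,0)=0$, $l(0,0)=0$ and $V_f(0)=0$. (A2) $\mathbb{X}$ and $\mathbb{X}_f$ are closed, $\mathbb{X}_f\subset\mathbb{X}$, $\mathbb{U}$ is compact, and $\mathbb{X},\mathbb{X}_f,\mathbb{U}$ each contain a neighborhood of the origin. (A3) For every $x\in\mathbb{X}_f$ there is a control $u$ feasible at $x$ with $f(x,u)\in\mathbb{X}_f$ and $l(x,u)+V_f(f(x,u))\le V_f(x)$. (A4) For every $x\in\mathbb{X}$ there exist an integer $N\ge0$ and a feasible control sequence of length $N$ from $x$ whose state sequence satisfies $x(N)\in\mathbb{X}_f$. For $x\in\mathbb{X}$, $N(x)$ denotes the minimum such $N$. (A5) There is an integer $M\ge 0$ with $N(x)\le M$ for all $x\in\mathbb{X}$. (A6) There are class $\mathcal{K}_\infty$ functions $\alpha_1,\alpha_2$ with $l(x,u)\ge\alpha_1(|x|)$ for all $x\in\mathbb{X}$, $u\in\mathbb{U}$, and $V_f(x)\le\alpha_2(|x|)$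 for all $x\in\mathbb{X}_f$. Define $V(x)=V^0_{N(x)}(x)$ for $x\in\mathbb{X}$. For $N(x)\ge1$ set $\kappa(x)=\kappa_{N(x)}(x)$. For $N(x)=0$ (equivalently $x\in\mathbb{X}_f$), let $\kappa(x)$ be a feasible control $u$ as in (A3). *)

From HB Require Import structures.
From mathcomp Require Import all_boot all_order all_algebra.
From mathcomp Require Import all_classical all_reals all_analysis.
Set Implicit Arguments. Unset Strict Implicit. Unset Printing Implicit Defensive.
Import Order.TTheory GRing.Theory Num.Theory numFieldNormedType.Exports.
Local Open Scope classical_set_scope.
Local Open Scope ring_scope.

Definition enorm (R : realType) (n : nat) (x : 'rV[R]_n) : R :=
  Num.sqrt (\sum_(i < n) x ord0 i ^+ 2).

Definition classKinf (R : realType) (a : R -> R) : Prop :=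
  [/\ a 0 = 0,
      {within `[0, +oo[%classic, continuous a},
      (forall s t, 0 <= s -> s < t -> a s < a t) &
      (forall M, exists s, 0 <= s /\ M < a s)].

Definition cont_on_open_nbhd (T U : topologicalType) (A : set T) (F : T -> U) : Prop :=
  exists O : set T, [/\ open O, A `<=` O & forall z, O z -> {for z, continuous F}].

Section MPC.
Variables (R : realType) (n m p : nat).
Variables (f : 'rV[R]_n -> 'rV[R]_m -> 'rV[R]_n)
          (h : 'rV[R]_n -> 'rV[R]_m -> 'rV[R]_p)
          (l : 'rV[R]_n -> 'rV[R]_m -> R) (Vf : 'rV[R]_n -> R)
          (X : set 'rV[R]_n) (U : set 'rV[R]_m) (Y : set 'rV[R]_p)
          (Xf : set 'rV[R]_n).

Fixpoint traj (x : 'rV[R]_n) (u : nat -> 'rV[R]_m) (k : nat) : 'rV[R]_n :=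
  match k with
  | 0 => x
  | k'.+1 => f (traj x u k') (u k')
  end.

Definition feasible (x : 'rV[R]_n) (u : 'rV[R]_m) : Prop :=
  [/\ X x, U u, X (f x u) & Y (h x u)].

(* (u(0),...,u(N-1)) is feasible from x; entries u(k), k >= N, are irrelevant *)
Definition feasible_seq (N : nat) (x : 'rV[R]_n) (u : nat -> 'rV[R]_m) : Prop :=
  forall k, (k < N)%N -> feasible (traj x u k) (u k).

Definition admissible (N : nat) (x : 'rV[R]_n) (u : nat -> 'rV[R]_m) : Prop :=
  feasible_seq N x u /\ Xf (traj x u N).

Definition cost (N : nat) (x : 'rV[R]_n) (u : nat -> 'rV[R]_m) : R :=
  \sum_(k < N) l (traj x u k) (u k) + Vf (traj x u N).

Definition is_minimizer (N : nat) (x : 'rV[R]_n) (u : nat -> 'rV[R]_m) : Prop :=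
  admissible N x u /\ forall v, admissible N x v -> cost N x u <= cost N x v.

Definition is_opt_value (N : nat) (x : 'rV[R]_n) (v : R) : Prop :=
  (exists u, admissible N x u /\ cost N x u = v) /\
  (forall u, admissible N x u -> v <= cost N x u).

Definition min_horizon (x : 'rV[R]_n) (N : nat) : Prop :=
  (exists u, admissible N x u) /\
  (forall N', (exists u, admissible N' x u) -> (N <= N')%N).

End MPC.

Definition asympt_stable_on (R : realType) (n : nat)
  (g : 'rV[R]_n -> 'rV[R]_n) (X : set 'rV[R]_n) : Prop :=
  [/\ (forall x, X x -> X (g x)),
      (forall eps : R, 0 < eps -> exists2 del : R, 0 < del &
         forall x, X x -> enorm x < del -> forall k, enorm (iter k g x) < eps) &
      (forall x, X x -> (fun k => iter k g x) @ \oo --> (0 : 'rV[R]_n))].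

(* If N(x) >= 1, the tail of an optimal control sequence is admissible from
   x+ = f(x, kappa x), whose minimal horizon is therefore N(x) - 1; comparing costs,
   V(x+) <= V(x) - l(x, kappa x) <= V(x) - alpha1 |x|.  The lower bound
   V >= alpha1 |x| comes from the first stage cost, or from (A3) when N(x) = 0.
   For the upper bound, V = Vf <= alpha2 on a ball of radius r around 0 contained
   in Xf, while on the compact X the cost of any admissible sequence of length
   N(x) <= M is at most M max l + max Vf =: C, which C/r * |x| dominates off that
   ball. *)

From HB Require Import structures.
From mathcomp Require Import all_boot all_order all_algebra.
From mathcomp Require Import all_classical all_reals all_analysis.
From mathcomp Require Import lra.
Import Order.TTheory GRing.Theory Num.Theory numFieldNormedType.Exports.
Local Open Scope classical_set_scope.
Local Open Scope ring_scope.
Set Implicit Arguments. Unset Strict Implicit. Unset Printing Implicit Defensive.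

Section ClassKinf.
Variables (R : realType) (a : R -> R).
Hypothesis aK : classKinf a.

Lemma Kinf_ge0 s : 0 <= s -> 0 <= a s.
Proof.
case: aK => a0 _ inc _; rewrite le_eqVlt => /predU1P[<-|s0]; first by rewrite a0.
by rewrite -a0 ltW // inc.
Qed.

Lemma Kinf_gt0 s : 0 < s -> 0 < a s.
Proof. by case: aK => a0 _ inc _ s0; rewrite -a0 inc. Qed.

Lemma Kinf_le s t : 0 <= s -> s <= t -> a s <= a t.
Proof.
case: aK => _ _ inc _ s0; rewrite le_eqVlt => /predU1P[->//|st].
by rewrite ltW // inc.
Qed.

Lemma Kinf_lt_inv s t : 0 <= s -> 0 <= t -> a s < a t -> s < t.
Proof. by move=> s0 t0 ast; rewrite ltNge; apply: contraTN ast => ts; rewrite -leNgt Kinf_le. Qed.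

Lemma Kinf_small e : 0 < e -> exists2 d, 0 < d & forall s, 0 <= s -> s <= d -> a s < e.
Proof.
case: aK => a0 /continuous_within_itvcyP[_ /cvgrPdist_lt/(_ e)] a_near inc _ e0.
have [d [d0 ad]] := filter_ex (filterI (nbhs_right_gt 0) (a_near e0)).
have ade : a d < e by move: ad; rewrite a0 sub0r normrN; apply: le_lt_trans; exact: ler_norm.
exists d => // s s0 sd; apply: le_lt_trans ade; exact: Kinf_le.
Qed.

Lemma classKinfD_scale c : 0 <= c -> classKinf (fun s => a s + c * s).
Proof.
case: (aK) => a0 ca inc unb c0; split.
- by rewrite a0 mulr0 addr0.
- apply: within_continuousD => //.
  by apply: continuous_in_subspaceT => z _; exact: mulrl_continuous.
- by move=> s t s0 st; rewrite ltr_leD ?inc // ler_wpM2l // ltW.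
- move=> M; have [s [s0 Ms]] := unb M; exists s; split => //.
  by have := mulr_ge0 c0 s0; lra.
Qed.

End ClassKinf.

Lemma enorm_ge0 (R : realType) (n : nat) (x : 'rV[R]_n) : 0 <= enorm x.
Proof. exact: sqrtr_ge0. Qed.

Lemma norm_le_enorm (R : realType) (n : nat) (x : 'rV[R]_n) : `|x| <= enorm x.
Proof.
have -> : `|x| = mx_norm x by [].
have [->|/mx_norm_neq0[[i j] ->]] := eqVneq (mx_norm x) 0; first exact: enorm_ge0.
rewrite /= (ord1 i) /enorm -sqrtr_sqr ler_sqrt; last first.
  by apply: sumr_ge0 => k _; exact: sqr_ge0.
by rewrite (bigD1 j) //= lerDl; apply: sumr_ge0 => k _; exact: sqr_ge0.
Qed.

Lemma nbhs0_enorm (R : realType) (n : nat) (A : set 'rV[R]_n) :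
  nbhs (0 : 'rV[R]_n) A -> exists2 r : R, 0 < r & forall x, enorm x < r -> A x.
Proof.
move=> /nbhs_ballP[r r0 rA]; exists r => // x xr; apply: rA.
by rewrite -ball_normE /ball_ /= sub0r normrN (le_lt_trans (norm_le_enorm x)).
Qed.

Lemma enorm_cvg0 (R : realType) (n : nat) (u : nat -> 'rV[R]_n) :
  (forall e : R, 0 < e -> exists j, forall k, (j <= k)%N -> enorm (u k) < e) ->
  u @ \oo --> (0 : 'rV[R]_n).
Proof.
move=> small; apply/cvgrPdist_lt => e e0; have [j uj] := small e e0.
near=> k; rewrite sub0r normrN (le_lt_trans (norm_le_enorm _)) // uj //.
by near: k; exact: nbhs_infty_ge.
Unshelve. all: by end_near. Qed.

Lemma cont_on_open_nbhd_ubound (R : realType) (T : topologicalType) (A : set T) (F : T -> R) :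
  compact A -> cont_on_open_nbhd A F -> exists M, forall x, A x -> F x <= M.
Proof.
move=> cA [W [_ AW cF]].
have /compact_bounded[M [_ FM]] : compact (F @` A).
  apply: continuous_compact => //; apply: continuous_in_subspaceT => z.
  by rewrite in_setE => Az; exact/cF/AW.
exists (M + 1) => x Ax; apply: le_trans (ler_norm _) _.
by apply: (FM (M + 1)); [rewrite ltrDl | exists x].
Qed.

Section Lyapunov.
Variables (R : realType) (n : nat) (g : 'rV[R]_n -> 'rV[R]_n) (X : set 'rV[R]_n).
Variables (V : 'rV[R]_n -> R) (a b c : R -> R).
Hypotheses (aK : classKinf a) (bK : classKinf b) (cK : classKinf c).
Hypothesis X_inv : forall x, X x -> X (g x).
Hypothesis V_ge : forall x, X x -> a (enorm x) <= V x.
Hypothesis V_le : forall x, X x -> V x <= b (enorm x).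
Hypothesis V_dec : forall x, X x -> V (g x) <= V x - c (enorm x).

Lemma iter_invariant x k : X x -> X (iter k g x).
Proof. by move=> Xx; elim: k => //= k; exact: X_inv. Qed.

Lemma V_iter_le x k : X x -> V (iter k g x) <= V x.
Proof.
move=> Xx; elim: k => //= k; apply: le_trans.
have := V_dec (iter_invariant k Xx); have := Kinf_ge0 cK (enorm_ge0 (iter k g x)).
lra.
Qed.

Lemma lyapunov_stable eps : 0 < eps -> exists2 del : R, 0 < del &
  forall x, X x -> enorm x < del -> forall k, enorm (iter k g x) < eps.
Proof.
move=> eps0; have [d d0 bd] := Kinf_small bK (Kinf_gt0 aK eps0).
exists d => // x Xx xd k; apply: (Kinf_lt_inv aK) (enorm_ge0 _) (ltW eps0) _.
have := V_ge (iter_invariant k Xx); have := V_iter_le k Xx; have := V_le Xx.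
have := bd _ (enorm_ge0 x) (ltW xd); lra.
Qed.

Lemma lyapunov_reach x d : X x -> 0 < d -> exists j, enorm (iter j g x) < d.
Proof.
move=> Xx d0; apply: contrapT => /forallNP far.
have far_ge j : d <= enorm (iter j g x) by rewrite leNgt; apply/negP => /far.
have V_drop k : V (iter k g x) <= V x - k%:R * c d.
  elim: k => [|k IH]; first by rewrite mul0r subr0.
  have := V_dec (iter_invariant k Xx); have := Kinf_le cK (ltW d0) (far_ge k).
  by rewrite -natr1 /=; lra.
pose k := (Num.trunc (V x / c d)).+1.
have := truncnS_gt (V x / c d); rewrite -/k ltr_pdivrMr ?Kinf_gt0 //.
have := V_drop k; have := V_ge (iter_invariant k Xx).
have := Kinf_ge0 aK (enorm_ge0 (iter k g x)); lra.
Qed.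

(* Once an orbit has entered the [del]-ball it stays in the [eps]-ball. *)
Lemma lyapunov_attractive x : X x -> (fun k => iter k g x) @ \oo --> (0 : 'rV[R]_n).
Proof.
move=> Xx; apply: enorm_cvg0 => e e0.
have [d d0 stable] := lyapunov_stable e0; have [j xj] := lyapunov_reach Xx d0.
exists j => k jk; rewrite -(subnK jk) iterD.
exact: stable (iter_invariant j Xx) xj _.
Qed.

Lemma lyapunov_asympt_stable : asympt_stable_on g X.
Proof. by split; [exact: X_inv | exact: lyapunov_stable | exact: lyapunov_attractive]. Qed.

End Lyapunov.

Section MPC.
Variables (R : realType) (n m p : nat).
Variables (f : 'rV[R]_n -> 'rV[R]_m -> 'rV[R]_n) (h : 'rV[R]_n -> 'rV[R]_m -> 'rV[R]_p).
Variables (l : 'rV[R]_n -> 'rV[R]_m -> R) (Vf : 'rV[R]_n -> R).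
Variables (X Xf : set 'rV[R]_n) (U : set 'rV[R]_m) (Y : set 'rV[R]_p).

Local Notation feas := (feasible f h X U Y).
Local Notation adm := (admissible f h X U Y Xf).
Local Notation horizon := (min_horizon f h X U Y Xf).
Local Notation J := (cost f l Vf).

Definition ucons (u0 : 'rV[R]_m) (w : nat -> 'rV[R]_m) (k : nat) : 'rV[R]_m :=
  if k is k'.+1 then w k' else u0.

Lemma traj_tail x u k : traj f (f x (u 0%N)) (u \o succn) k = traj f x u k.+1.
Proof. by elim: k => //= k ->. Qed.

Lemma traj_ucons x u0 w k : traj f x (ucons u0 w) k.+1 = traj f (f x u0) w k.
Proof. by elim: k => //= k ->. Qed.

Lemma admissible_head N x u : adm N.+1 x u -> feas x (u 0%N).
Proof. by case=> /(_ 0%N isT). Qed.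

Lemma admissible_tail N x u : adm N.+1 x u -> adm N (f x (u 0%N)) (u \o succn).
Proof. by case=> feas_u Xf_u; split=> [k kN|]; rewrite traj_tail //; exact: feas_u. Qed.

Lemma admissible_ucons N x u0 w : feas x u0 -> adm N (f x u0) w -> adm N.+1 x (ucons u0 w).
Proof. by move=> feas_u0 [feas_w Xf_w]; split=> [[|k] kN|]; rewrite ?traj_ucons //; exact: feas_w. Qed.

Lemma cost_tail N x u : J N.+1 x u = l x (u 0%N) + J N (f x (u 0%N)) (u \o succn).
Proof.
rewrite /cost big_ord_recl -traj_tail addrA; congr (_ + _ + _).
by apply: eq_bigr => i _; rewrite lift0 -traj_tail.
Qed.

Lemma min_horizon0 x : Xf x -> horizon x 0.
Proof. by move=> Xfx; split=> [|//]; exists (fun=> 0); split. Qed.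

Lemma min_horizon_tail N x u : horizon x N.+1 -> adm N.+1 x u -> horizon (f x (u 0%N)) N.
Proof.
move=> [_ N_min] adm_u; split; first by exists (u \o succn); exact: admissible_tail.
move=> N' [w adm_w]; rewrite -ltnS; apply: N_min; exists (ucons (u 0%N) w).
exact: admissible_ucons (admissible_head adm_u) adm_w.
Qed.

Lemma opt_value_cost N x u v :
  is_minimizer f h l Vf X U Y Xf N x u -> is_opt_value f h l Vf X U Y Xf N x v -> v = J N x u.
Proof. by move=> [adm_u u_min] [[w [adm_w <-]] v_min]; apply/le_anti; rewrite v_min ?u_min. Qed.

Lemma opt_value0 x v : is_opt_value f h l Vf X U Y Xf 0 x v -> v = Vf x.
Proof. by move=> [[u [_ <-]] _]; rewrite /cost big_ord0 add0r. Qed.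

Hypothesis reachable : forall x, X x -> exists N u, adm N x u.

Lemma min_horizon_exists x : X x -> exists N, horizon x N.
Proof.
move=> /reachable[N [u adm_u]].
have ex_adm : exists N, `[< exists u, adm N x u >] by exists N; apply/asboolP; exists u.
case: (ex_minnP ex_adm) => N0 /asboolP adm_N0 N0_min; exists N0; split => // N' adm_N'.
by apply: N0_min; apply/asboolP.
Qed.

Hypothesis l_ge0 : forall x u, X x -> U u -> 0 <= l x u.
Hypothesis Vf_gt0 : forall x, Xf x -> x != 0 -> 0 < Vf x.
Hypothesis Vf0 : Vf 0 = 0.

Lemma Vf_ge0 x : Xf x -> 0 <= Vf x.
Proof. by move=> Xfx; have [->|/(Vf_gt0 Xfx)/ltW//] := eqVneq x 0; rewrite Vf0. Qed.

Lemma cost_ge0 N x u : adm N x u -> 0 <= J N x u.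
Proof.
elim: N x u => [|N IH] x u adm_u; first by rewrite /cost big_ord0 add0r Vf_ge0 //; case: adm_u.
have [Xx Uu _ _] := admissible_head adm_u.
by rewrite cost_tail addr_ge0 ?l_ge0 // IH //; exact: admissible_tail.
Qed.

Lemma cost_le N x u Lb Fb :
  (forall x u, X x -> U u -> l x u <= Lb) -> (forall x, Xf x -> Vf x <= Fb) ->
  adm N x u -> J N x u <= N%:R * Lb + Fb.
Proof.
move=> l_le Vf_le; elim: N x u => [|N IH] x u adm_u.
  by rewrite /cost big_ord0 mul0r !add0r Vf_le //; case: adm_u.
have [Xx Uu _ _] := admissible_head adm_u.
rewrite cost_tail -natr1 mulrDl mul1r.
by have := l_le _ _ Xx Uu; have := IH _ _ (admissible_tail adm_u); lra.
Qed.

Variable alpha1 : R -> R.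
Hypothesis terminal_decrease : forall x, Xf x ->
  exists u, [/\ feas x u, Xf (f x u) & l x u + Vf (f x u) <= Vf x].
Hypothesis l_ge_alpha1 : forall x u, X x -> U u -> alpha1 (enorm x) <= l x u.

Lemma Vf_ge_alpha1 x : Xf x -> alpha1 (enorm x) <= Vf x.
Proof.
move=> /terminal_decrease[u [[Xx Uu _ _] Xf_fxu decr]].
by have := l_ge_alpha1 Xx Uu; have := Vf_ge0 Xf_fxu; lra.
Qed.

Lemma cost_ge_alpha1 N x u : adm N x u -> alpha1 (enorm x) <= J N x u.
Proof.
case: N => [|N] adm_u; first by rewrite /cost big_ord0 add0r Vf_ge_alpha1 //; case: adm_u.
have [Xx Uu _ _] := admissible_head adm_u.
rewrite cost_tail; have := l_ge_alpha1 Xx Uu.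
by have := cost_ge0 (admissible_tail adm_u); lra.
Qed.

Variables (V : 'rV[R]_n -> R) (kappa : 'rV[R]_n -> 'rV[R]_m).
Hypothesis V_opt : forall x N, X x -> horizon x N -> is_opt_value f h l Vf X U Y Xf N x (V x).
Hypothesis kappa_opt : forall x N, X x -> horizon x N -> (0 < N)%N ->
  exists u, is_minimizer f h l Vf X U Y Xf N x u /\ u 0%N = kappa x.
Hypothesis kappa_terminal : forall x, X x -> horizon x 0 ->
  [/\ feas x (kappa x), Xf (f x (kappa x)) & l x (kappa x) + Vf (f x (kappa x)) <= Vf x].

Lemma V_terminal x : X x -> Xf x -> V x = Vf x.
Proof. by move=> Xx Xfx; exact: opt_value0 (V_opt Xx (min_horizon0 Xfx)). Qed.

Lemma V_ge_alpha1 x : X x -> alpha1 (enorm x) <= V x.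
Proof.
move=> Xx; have [N hN] := min_horizon_exists Xx.
by have [[u [adm_u <-]] _] := V_opt Xx hN; exact: cost_ge_alpha1.
Qed.

Lemma kappa_feasible x : X x -> feas x (kappa x).
Proof.
move=> Xx; have [[|N] hN] := min_horizon_exists Xx; first by case: (kappa_terminal Xx hN).
by have [u [[adm_u _] <-]] := kappa_opt Xx hN isT; exact: admissible_head adm_u.
Qed.

Lemma V_decrease x : X x -> V (f x (kappa x)) <= V x - alpha1 (enorm x).
Proof.
move=> Xx; have [_ Uk X_next _] := kappa_feasible Xx; have := l_ge_alpha1 Xx Uk.
have [[|N] hN] := min_horizon_exists Xx.
  have [_ Xf_next decr] := kappa_terminal Xx hN; have [[u [_ Xfx]] _] := hN.
  by rewrite !V_terminal //; lra.
have [u [min_u u0]] := kappa_opt Xx hN isT.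
have adm_tail := admissible_tail min_u.1; have hN' := min_horizon_tail hN min_u.1.
rewrite u0 in adm_tail hN'; have [_ V_min] := V_opt X_next hN'.
rewrite (opt_value_cost min_u (V_opt Xx hN)) cost_tail u0.
by have := V_min _ adm_tail; lra.
Qed.


Hypotheses (cX : compact X) (cU : compact U) (cXf : closed Xf) (XfX : Xf `<=` X).
Hypothesis l_cont : cont_on_open_nbhd (X `*` U) (fun z => l z.1 z.2).
Hypothesis Vf_cont : cont_on_open_nbhd Xf Vf.
Variable M : nat.
Hypothesis horizon_le : forall x N, X x -> horizon x N -> (N <= M)%N.

Lemma V_ubound : exists C, forall x, X x -> V x <= C.
Proof.
have [Lb l_le] := cont_on_open_nbhd_ubound (compact_setX cX cU) l_cont.
have [Fb Vf_le] := cont_on_open_nbhd_ubound (subclosed_compact cXf cX XfX) Vf_cont.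
have l_le' x u : X x -> U u -> l x u <= Num.max Lb 0.
  by move=> Xx Uu; rewrite le_max (l_le (x, u)).
exists (M%:R * Num.max Lb 0 + Fb) => x Xx; have [N hN] := min_horizon_exists Xx.
have [[u [adm_u <-]] _] := V_opt Xx hN; apply: le_trans (cost_le l_le' Vf_le adm_u) _.
by rewrite lerD2r ler_wpM2r ?le_max ?lexx ?orbT // ler_nat (horizon_le Xx hN).
Qed.

Variable alpha2 : R -> R.
Hypotheses (a2K : classKinf alpha2) (Vf_le_alpha2 : forall x, Xf x -> Vf x <= alpha2 (enorm x)).
Hypothesis Xf_nbhs0 : nbhs (0 : 'rV[R]_n) Xf.

Lemma V_le_Kinf : exists beta, classKinf beta /\ forall x, X x -> V x <= beta (enorm x).
Proof.
have [C V_le] := V_ubound; have [r r0 r_Xf] := nbhs0_enorm Xf_nbhs0.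
have q0 : 0 <= Num.max C 0 / r by rewrite divr_ge0 ?le_max ?lexx ?orbT ?ltW.
exists (fun s => alpha2 s + Num.max C 0 / r * s); split; first exact: classKinfD_scale.
move=> x Xx; have := Kinf_ge0 a2K (enorm_ge0 x); have := mulr_ge0 q0 (enorm_ge0 x).
have [/r_Xf Xfx|rx] := ltP (enorm x) r; first by rewrite V_terminal //; have := Vf_le_alpha2 Xfx; lra.
have : Num.max C 0 <= Num.max C 0 / r * enorm x.
  by rewrite -{1}(divfK (lt0r_neq0 r0) (Num.max C 0)) ler_wpM2l.
have : C <= Num.max C 0 by rewrite le_max lexx.
by have := V_le x Xx; lra.
Qed.

End MPC.

Unset Implicit Arguments.

Theorem proposition4 (R : realType) (n m p : nat)
  (f : 'rV[R]_n -> 'rV[R]_m -> 'rV[R]_n) (h : 'rV[R]_n -> 'rV[R]_m -> 'rV[R]_p)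
  (l : 'rV[R]_n -> 'rV[R]_m -> R) (Vf : 'rV[R]_n -> R)
  (X Xf : set 'rV[R]_n) (U : set 'rV[R]_m) (Y : set 'rV[R]_p)
  (alpha1 alpha2 : R -> R)
  (V : 'rV[R]_n -> R) (kappa : 'rV[R]_n -> 'rV[R]_m) :
  (* (A1) *)
  cont_on_open_nbhd (X `*` U) (fun z => f z.1 z.2) ->
  cont_on_open_nbhd (X `*` U) (fun z => l z.1 z.2) ->
  cont_on_open_nbhd (X `*` U) (fun z => h z.1 z.2) ->
  cont_on_open_nbhd Xf Vf ->
  (forall x u, X x -> U u -> 0 <= l x u) ->
  (forall x u, X x -> U u -> u != 0 -> 0 < l x u) ->
  (forall x, Xf x -> x != 0 -> 0 < Vf x) ->
  f 0 0 = 0 -> l 0 0 = 0 -> Vf 0 = 0 ->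
  (* (A2) *)
  closed X -> closed Xf -> Xf `<=` X -> compact U ->
  nbhs (0 : 'rV[R]_n) X -> nbhs (0 : 'rV[R]_n) Xf -> nbhs (0 : 'rV[R]_m) U ->
  (* (A3) *)
  (forall x, Xf x -> exists u, [/\ feasible f h X U Y x u, Xf (f x u) &
                                   l x u + Vf (f x u) <= Vf x]) ->
  (* (A4) *)
  (forall x, X x -> exists N u, admissible f h X U Y Xf N x u) ->
  (* (A5) *)
  (exists M : nat, forall x N, X x -> min_horizon f h X U Y Xf x N -> (N <= M)%N) ->
  (* (A6) *)
  classKinf alpha1 -> classKinf alpha2 ->
  (forall x u, X x -> U u -> alpha1 (enorm x) <= l x u) ->
  (forall x, Xf x -> Vf x <= alpha2 (enorm x)) ->
  (* minimum of the horizon-N problem attained whenever feasible *)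
  (forall N x, (exists u, admissible f h X U Y Xf N x u) ->
     exists u, is_minimizer f h l Vf X U Y Xf N x u) ->
  (* additional assumptions of the proposition *)
  (exists O : set 'rV[R]_n, [/\ open O, O 0 & O `<=` Xf]) ->
  compact X ->
  (* V(x) = V^0_{N(x)}(x) *)
  (forall x N, X x -> min_horizon f h X U Y Xf x N ->
     is_opt_value f h l Vf X U Y Xf N x (V x)) ->
  (* kappa(x) = first element of a minimizer of the horizon-N(x) problem, N(x) >= 1 *)
  (forall x N, X x -> min_horizon f h X U Y Xf x N -> (0 < N)%N ->
     exists u, is_minimizer f h l Vf X U Y Xf N x u /\ u 0%N = kappa x) ->
  (* kappa(x) for N(x) = 0: a control as in (A3) *)
  (forall x, X x -> min_horizon f h X U Y Xf x 0 ->
     [/\ feasible f h X U Y x (kappa x), Xf (f x (kappa x)) &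
         l x (kappa x) + Vf (f x (kappa x)) <= Vf x]) ->
  (* conclusion *)
  [/\ (forall x, X x -> X (f x (kappa x))),
      (exists beta : R -> R, classKinf beta /\
         forall x, X x ->
           [/\ alpha1 (enorm x) <= V x, V x <= beta (enorm x) &
               V (f x (kappa x)) <= V x - alpha1 (enorm x)]) &
      asympt_stable_on (fun x => f x (kappa x)) X].
Proof.
move=> _ l_cont _ Vf_cont l_ge0 _ Vf_gt0 _ _ Vf0 _ cXf XfX cU _ Xf_nbhs0 _
  terminal_decrease reachable [M horizon_le] a1K a2K l_ge_alpha1 Vf_le_alpha2 _ _ cX
  V_opt kappa_opt kappa_terminal.
(* Existence of minimizers is built into the hypotheses on V and kappa, and the
   open neighbourhood of 0 inside Xf is already given by (A2) as nbhs 0 Xf. *)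
have X_inv x : X x -> X (f x (kappa x)).
  by move=> Xx; case: (kappa_feasible reachable kappa_opt kappa_terminal Xx).
have V_ge := V_ge_alpha1 reachable l_ge0 Vf_gt0 Vf0 terminal_decrease l_ge_alpha1 V_opt.
have V_dec := V_decrease reachable l_ge_alpha1 V_opt kappa_opt kappa_terminal.
have [beta [bK V_le]] := V_le_Kinf reachable V_opt cX cU cXf XfX l_cont Vf_cont
  horizon_le a2K Vf_le_alpha2 Xf_nbhs0.
split => //.
  by exists beta; split => // x Xx; split; [exact: V_ge | exact: V_le | exact: V_dec].
exact: (lyapunov_asympt_stable a1K bK a1K X_inv V_ge V_le V_dec).
Qed.
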